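(* If $r$ is a nonzero integer and $n$ is a positive integer, then \[ 5F_r^2 \;\Big|\; (-1)^{r+1}F_{2r(n+1)}+(-1)^{r(n+1)}F_{2r}+F_{2rn}. \]
   Context: $F_n$ denotes the Fibonacci numbers, defined for all integers $n$ by $F_0=0,F_1=1$, $F_n=F_{n-1}+F_{n-2}$, with $F_{-n}=(-1)^{n-1}F_n$. *)

From Stdlib Require Import ZArith.
Open Scope Z_scope.

Fixpoint fib_nat (n : nat) : Z :=
  match n with
  | O => 0
  | S m => match m with
           | O => 1
           | S k => fib_nat m + fib_nat k
           end
  end.

(* (-1)^k for an integer exponent k (well defined since (-1)^{-1} = -1). *)
Definition sgn_pow (k : Z) : Z := if Z.even k then 1 else -1.

Definition fib (n : Z) : Z :=
  if 0 <=? n then fib_nat (Z.to_nat n)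
  else sgn_pow (- n - 1) * fib_nat (Z.to_nat (- n)).

(* Put [m = 5 F_r^2].  Extended to all integers, the Fibonacci numbers satisfy
   [F_{a+b} + (-1)^b F_{a-b} = L_b F_a] with [L_b = F_{b-1} + F_{b+1}], and by Cassini
   [L_{2r} = m + 2(-1)^r].  Hence [G k = F_{2rk}] satisfies [G (k+1) + G (k-1) = L_{2r} G k],
   and the twisted sequence [y k = (-1)^{rk} G k] has second differences divisible by [m]:
   its increments are constant modulo [m].  Multiplied by the unit [(-1)^{rn}], the
   expression of the theorem is [(y 1 - y 0) - (y (n+1) - y n)], a difference of two
   increments. *)
From Stdlib Require Import ZArith Lia.
Open Scope Z_scope.

Lemma sgn_pow_add a b : sgn_pow (a + b) = sgn_pow a * sgn_pow b.
Proof.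
  unfold sgn_pow; rewrite Z.even_add.
  destruct (Z.even a), (Z.even b); reflexivity.
Qed.

Lemma sgn_pow_opp a : sgn_pow (- a) = sgn_pow a.
Proof. unfold sgn_pow; rewrite Z.even_opp; reflexivity. Qed.

Lemma sgn_pow_cases a : sgn_pow a = 1 \/ sgn_pow a = -1.
Proof. unfold sgn_pow; destruct (Z.even a); [left | right]; reflexivity. Qed.

Lemma sgn_pow_succ a : sgn_pow (a + 1) = - sgn_pow a.
Proof. rewrite sgn_pow_add; change (sgn_pow 1) with (-1); ring. Qed.

Lemma sgn_pow_sub2 a : sgn_pow (a - 2) = sgn_pow a.
Proof. replace (a - 2) with (a + -2) by ring; rewrite sgn_pow_add; change (sgn_pow (-2)) with 1; ring. Qed.

Lemma fib_nat_SS k : fib_nat (S (S k)) = fib_nat (S k) + fib_nat k.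
Proof. reflexivity. Qed.

Lemma fib_of_nat k : fib (Z.of_nat k) = fib_nat k.
Proof. unfold fib; rewrite Nat2Z.id; destruct (Z.leb_spec 0 (Z.of_nat k)); [reflexivity | lia]. Qed.

(* The defining sign [(-1)^{k-1}] is rewritten as [(-1)^{k+1}], which also covers [k = 0]. *)
Lemma fib_opp_of_nat k : fib (- Z.of_nat k) = sgn_pow (Z.of_nat k + 1) * fib_nat k.
Proof.
  destruct k as [|k]; [reflexivity|].
  unfold fib; destruct (Z.leb_spec 0 (- Z.of_nat (S k))); [lia|].
  rewrite Z.opp_involutive, Nat2Z.id, <- (sgn_pow_sub2 (_ + 1)).
  f_equal; f_equal; lia.
Qed.

Lemma fib_opp n : fib (- n) = sgn_pow (n + 1) * fib n.
Proof.
  assert (Hnonneg : forall p, 0 <= p -> fib (- p) = sgn_pow (p + 1) * fib p).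
  { intros p Hp; rewrite <- (Z2Nat.id p Hp), fib_opp_of_nat, fib_of_nat; reflexivity. }
  destruct (Z.le_gt_cases 0 n) as [Hn | Hn]; [exact (Hnonneg n Hn)|].
  rewrite <- (Z.opp_involutive n) at 3.
  rewrite (Hnonneg (- n)) by lia.
  rewrite Z.mul_assoc, <- sgn_pow_add.
  replace (n + 1 + (- n + 1)) with (1 + 1) by ring.
  change (sgn_pow (1 + 1)) with 1; ring.
Qed.

Lemma fib_rec n : fib (n + 2) = fib (n + 1) + fib n.
Proof.
  destruct (Z.le_gt_cases 0 n) as [Hn | Hn].
  - rewrite <- (Z2Nat.id n Hn).
    replace (Z.of_nat (Z.to_nat n) + 2) with (Z.of_nat (S (S (Z.to_nat n)))) by lia.
    replace (Z.of_nat (Z.to_nat n) + 1) with (Z.of_nat (S (Z.to_nat n))) by lia.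
    rewrite !fib_of_nat; reflexivity.
  - destruct (Z.eq_dec n (-1)) as [-> | Hn1]; [reflexivity|].
    set (j := Z.to_nat (- (n + 2))).
    replace (n + 2) with (- Z.of_nat j) by lia.
    replace (n + 1) with (- Z.of_nat (S j)) by lia.
    replace n with (- Z.of_nat (S (S j))) by lia.
    rewrite !fib_opp_of_nat, fib_nat_SS, !Nat2Z.inj_succ, <- !Z.add_1_r, !sgn_pow_succ.
    ring.
Qed.

Lemma fib_succ n : fib (n + 1) = fib n + fib (n - 1).
Proof. rewrite <- (Z.sub_add 1 n) at 1 2; rewrite <- Z.add_assoc; apply fib_rec. Qed.

Lemma fib_add a b : fib (a + b) = fib a * fib (b + 1) + fib (a - 1) * fib b.
Proof.
  revert b; induction a as [|a IH|a IH] using Z.peano_ind; intro b.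
  - rewrite Z.add_0_l; change (fib 0) with 0; change (fib (0 - 1)) with 1; ring.
  - rewrite <- Z.add_1_r, Z.add_simpl_r.
    replace (a + 1 + b) with (a + (b + 1)) by ring.
    rewrite IH, (fib_succ a), (fib_succ (b + 1)), Z.add_simpl_r; ring.
  - rewrite <- Z.sub_1_r.
    replace (a - 1 + b) with (a + (b - 1)) by ring.
    pose proof (fib_succ (a - 1)) as Ha; rewrite Z.sub_add in Ha.
    rewrite IH, Z.sub_add, (fib_succ b), Ha; ring.
Qed.

Lemma fib_cassini n : fib (n + 1) * fib (n - 1) - fib n ^ 2 = sgn_pow n.
Proof.
  pose proof (fib_add (n + 1) (- n)) as H.
  replace (n + 1 + - n) with 1 in H by ring; rewrite Z.add_simpl_r in H.
  replace (- n + 1) with (- (n - 1)) in H by ring.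
  rewrite !fib_opp, Z.sub_add, sgn_pow_succ in H; change (fib 1) with 1 in H.
  destruct (sgn_pow_cases n) as [Hs | Hs]; rewrite Hs in *; lia.
Qed.

Definition lucas (n : Z) : Z := fib (n - 1) + fib (n + 1).

Lemma lucas_double r : lucas (2 * r) = 5 * fib r ^ 2 + 2 * sgn_pow r.
Proof.
  unfold lucas.
  replace (2 * r - 1) with (r + (r - 1)) by ring.
  replace (2 * r + 1) with ((r + 1) + r) by ring.
  rewrite (fib_add r), (fib_add (r + 1)), Z.sub_add, Z.add_simpl_r, <- fib_cassini, (fib_succ r).
  ring.
Qed.

Lemma fib_add_sub a b : fib (a + b) + sgn_pow b * fib (a - b) = lucas b * fib a.
Proof.
  unfold lucas.
  replace (a - b) with (a + - b) by ring.
  rewrite (fib_add a b), (fib_add a (- b)).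
  replace (- b + 1) with (- (b - 1)) by ring.
  rewrite !fib_opp, Z.sub_add, sgn_pow_succ.
  destruct (sgn_pow_cases b) as [-> | ->]; ring.
Qed.

Lemma divide_sub_of_divide_steps (m : Z) (d : Z -> Z) :
  (forall k, (m | d (k + 1) - d k)) -> forall k, (m | d k - d 0).
Proof.
  intros Hstep k; induction k as [|k IH|k IH] using Z.peano_ind.
  - rewrite Z.sub_diag; apply Z.divide_0_r.
  - replace (d (Z.succ k) - d 0) with ((d (k + 1) - d k) + (d k - d 0))
      by (rewrite Z.add_1_r; ring).
    apply Z.divide_add_r; [apply Hstep | exact IH].
  - pose proof (Hstep (Z.pred k)) as Hk; rewrite <- Z.sub_1_r, Z.sub_add in Hk.
    replace (d (Z.pred k) - d 0) with ((d k - d 0) - (d k - d (k - 1)))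
      by (rewrite Z.sub_1_r; ring).
    apply Z.divide_sub_r; assumption.
Qed.

Definition twisted_fib (r k : Z) : Z := sgn_pow (r * k) * fib (2 * r * k).

Lemma twisted_fib_second_difference r k :
  twisted_fib r (k + 1) - 2 * twisted_fib r k + twisted_fib r (k - 1)
  = 5 * fib r ^ 2 * (sgn_pow r * twisted_fib r k).
Proof.
  assert (Hsgn2r : sgn_pow (2 * r) = 1).
  { replace (2 * r) with (r + r) by ring; rewrite sgn_pow_add.
    destruct (sgn_pow_cases r) as [-> | ->]; reflexivity. }
  pose proof (fib_add_sub (2 * r * k) (2 * r)) as Hrec.
  rewrite lucas_double, Hsgn2r, Z.mul_1_l in Hrec.
  unfold twisted_fib.
  replace (2 * r * (k + 1)) with (2 * r * k + 2 * r) by ring.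
  replace (2 * r * (k - 1)) with (2 * r * k - 2 * r) by ring.
  replace (r * (k + 1)) with (r * k + r) by ring.
  replace (r * (k - 1)) with (r * k + - r) by ring.
  rewrite !sgn_pow_add, sgn_pow_opp.
  set (Gnext := fib (2 * r * k + 2 * r)) in *.
  set (Gprev := fib (2 * r * k - 2 * r)) in *.
  replace Gnext with ((5 * fib r ^ 2 + 2 * sgn_pow r) * fib (2 * r * k) - Gprev) by lia.
  destruct (sgn_pow_cases r) as [-> | ->]; ring.
Qed.

Theorem mainTheorem7 (r n : Z) (hr : r <> 0) (hn : 0 < n) :
  (5 * fib r ^ 2 |
     sgn_pow (r + 1) * fib (2 * r * (n + 1))
     + sgn_pow (r * (n + 1)) * fib (2 * r)
     + fib (2 * r * n)).
Proof.
  clear hr hn.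
  set (y := twisted_fib r).
  assert (Hsteps : forall k,
             (5 * fib r ^ 2 | (y (k + 1 + 1) - y (k + 1)) - (y (k + 1) - y k))).
  { intro k; exists (sgn_pow r * y (k + 1)).
    pose proof (twisted_fib_second_difference r (k + 1)) as H.
    rewrite Z.add_simpl_r in H; fold y in H; lia. }
  apply (Z.divide_trans _ _ _ (divide_sub_of_divide_steps _ (fun k => y (k + 1) - y k) Hsteps n)).
  exists (- sgn_pow (r * n)); unfold y, twisted_fib.
  replace (r * (n + 1)) with (r * n + r) by ring.
  rewrite Z.add_0_l, !Z.mul_1_r, !Z.mul_0_r, sgn_pow_succ, sgn_pow_add.
  change (fib 0) with 0.
  destruct (sgn_pow_cases (r * n)) as [-> | ->], (sgn_pow_cases r) as [-> | ->]; ring.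
Qed.
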